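(* Let $P$ be an order having at least one maximum chain. If $P$ has a relatively maximum full trunk $R$, then $R$ is the union of all maximum chains of $P$. Moreover, $P$ has a relatively maximum full trunk if and only if the union of all maximum chains of $P$ is a trunk.
   Context: Orders are partial orders; $x\sim y$ means $x\ne y$ and $x,y$ incomparable. A trunk of $P$ is a subset $T$ (with the induced order) such that for all pairwise distinct $x,y,z\in T$, $x\sim y$ and $y\sim z$ imply $x\sim z$. A chain of $P$ is maximum if it is maximal under inclusion and no chain of $P$ has greater cardinality. A full trunk is a trunk containing at least one maximum chain of $P$. A relatively maximum full trunk is a full trunk that is the unique full trunk of $P$ maximal under inclusion. *)

From Stdlib Require Import Classical.

Set Implicit Arguments.

Section Orders.
Variable T : Type.
Variable le : T -> T -> Prop.

Definition is_order : Prop :=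
  (forall x, le x x) /\
  (forall x y, le x y -> le y x -> x = y) /\
  (forall x y z, le x y -> le y z -> le x z).

Definition incomp (x y : T) : Prop := x <> y /\ ~ le x y /\ ~ le y x.

Definition subset (A B : T -> Prop) : Prop := forall x, A x -> B x.
Definition same_set (A B : T -> Prop) : Prop := forall x, A x <-> B x.

Definition trunk (R : T -> Prop) : Prop :=
  forall x y z, R x -> R y -> R z -> x <> y -> y <> z -> x <> z ->
    incomp x y -> incomp y z -> incomp x z.

Definition chain (C : T -> Prop) : Prop :=
  forall x y, C x -> C y -> le x y \/ le y x.

Definition maximal_chain (C : T -> Prop) : Prop :=
  chain C /\ (forall D, chain D -> subset C D -> subset D C).

Definition card_le (A B : T -> Prop) : Prop :=
  exists f : {x | A x} -> {x | B x}, forall a b, f a = f b -> a = b.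
Definition card_lt (A B : T -> Prop) : Prop := card_le A B /\ ~ card_le B A.

Definition maximum_chain (C : T -> Prop) : Prop :=
  maximal_chain C /\ (forall D, chain D -> ~ card_lt C D).

Definition full_trunk (R : T -> Prop) : Prop :=
  trunk R /\ exists C, maximum_chain C /\ subset C R.

Definition maximal_full_trunk (R : T -> Prop) : Prop :=
  full_trunk R /\ (forall S, full_trunk S -> subset R S -> subset S R).

Definition rel_max_full_trunk (R : T -> Prop) : Prop :=
  maximal_full_trunk R /\ (forall S, maximal_full_trunk S -> same_set S R).

Definition union_max_chains (x : T) : Prop :=
  exists C, maximum_chain C /\ C x.

End Orders.

(** A full trunk [R] contains a maximum chain [C], and every [x] of [R] outside
    [C] is incomparable to exactly one [c] of [C]: if [x] were also incomparable
    to a second [d], the trunk condition on [c ~ x ~ d] would make [c ~ d]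
    inside the chain [C].  Hence exchanging [c] for [x] yields a chain, whose
    maximal extension is at least as large as [C] and is therefore a maximum
    chain through [x].  So every full trunk lies in the union [U] of the maximum
    chains; conversely each maximum chain is itself a full trunk and extends (by
    Zorn) to a maximal full trunk.  Thus a relatively maximum full trunk is
    exactly [U], and it exists precisely when [U] is a trunk. *)

From Stdlib Require Import Classical ClassicalEpsilon ProofIrrelevance.
From mathcomp Require classical_sets.

Set Implicit Arguments.
Unset Strict Implicit.

Section MaximalSuperset.
Variable T : Type.
Implicit Types (D X Y : T -> Prop) (F : (T -> Prop) -> Prop).

Definition union_of F (x : T) : Prop := exists2 X, F X & X x.

Definition nested F : Prop := forall X Y, F X -> F Y -> subset X Y \/ subset Y X.

Definition holds_on_triples (Q : T -> T -> T -> Prop) X : Prop :=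
  forall x y z, X x -> X y -> X z -> Q x y z.

Lemma set_ext X Y : subset X Y -> subset Y X -> X = Y.
Proof. intros XY YX; apply classical_sets.seteqP; split; assumption. Qed.

Lemma nested_upper_bound F X Y : nested F -> F X -> F Y ->
  exists2 Z, F Z & subset X Z /\ subset Y Z.
Proof.
  intros Fnest FX FY.
  destruct (Fnest X Y FX FY) as [XY | YX].
  - exists Y; [assumption | split; [assumption | intros x; auto]].
  - exists X; [assumption | split; [intros x; auto | assumption]].
Qed.

Lemma union_holds_on_triples Q F :
  (forall X, F X -> holds_on_triples Q X) -> nested F ->
  holds_on_triples Q (union_of F).
Proof.
  intros FQ Fnest x y z [X FX Xx] [Y FY Yy] [Z FZ Zz].
  destruct (nested_upper_bound Fnest FX FY) as [W FW [XW YW]].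
  destruct (nested_upper_bound Fnest FW FZ) as [W' FW' [WW' ZW']].
  apply (FQ W' FW'); auto.
Qed.

Lemma extend_to_maximal (P : (T -> Prop) -> Prop) D :
  P D ->
  (forall F, (exists X, F X) -> (forall X, F X -> P X) -> nested F ->
     P (union_of F)) ->
  exists M, P M /\ subset D M /\ (forall Y, P Y -> subset M Y -> subset Y M).
Proof.
  intros PD Punion.
  (* Zorn's lemma proper also needs the empty nested family, so it is applied
     to the sets [X] with [P (D ∪ X)]; the empty union then stands for [D]. *)
  set (joinD := fun X x => D x \/ X x).
  assert (joinD_absorb : forall X, subset D X -> joinD X = X).
  { intros X DX; apply set_ext; [intros x [Dx | Xx]; auto | intros x; now right]. }
  destruct (@classical_sets.Zorn_bigcup T (fun X => P (joinD X))) as [A [PA Amax]].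
  - intros F FP Fnest; change (P (joinD (union_of F))).
    destruct (classic (exists X, F X)) as [[X0 FX0] | Fempty].
    + set (G := fun Y => exists2 X, F X & Y = joinD X).
      assert (union_G : union_of G = joinD (union_of F)).
      { apply set_ext.
        - intros x [Y [X FX ->] [Dx | Xx]]; [now left | right; now exists X].
        - intros x [Dx | [X FX Xx]].
          + exists (joinD X0); [now exists X0 | now left].
          + exists (joinD X); [now exists X | now right]. }
      rewrite <- union_G.
      apply Punion.
      * exists (joinD X0); now exists X0.
      * intros Y [X FX ->]; exact (FP X FX).
      * intros Y Y' [X FX ->] [X' FX' ->].
        destruct (Fnest X X' FX FX') as [XX' | X'X]; [left | right];
          intros x [Dx | Xx]; unfold joinD; auto.
    + replace (joinD (union_of F)) with D; [exact PD |].
      apply set_ext; [intros x Dx; now left |].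
      intros x [Dx | [X FX _]]; [exact Dx | exfalso; eauto].
  - exists (joinD A); split; [exact PA |]; split; [intros x; now left |].
    intros Y PY AY; apply NNPP; intros not_YA.
    apply (Amax Y).
    + split; [intros x Ax; apply AY; now right |].
      intros YA; apply not_YA; intros x Yx; right; auto.
    + rewrite joinD_absorb; [exact PY | intros x Dx; apply AY; now left].
Qed.

End MaximalSuperset.

Section Cardinality.
Variable T : Type.
Implicit Types A B C : T -> Prop.

Lemma card_le_trans A B C : card_le A B -> card_le B C -> card_le A C.
Proof. intros [f f_inj] [g g_inj]; exists (fun a => g (f a)); auto. Qed.

Lemma subset_card_le A B : subset A B -> card_le A B.
Proof.
  intros AB; exists (fun a => exist B (proj1_sig a) (AB _ (proj2_sig a))).
  intros [a Aa] [b Ab] E; injection E as ->.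
  f_equal; apply proof_irrelevance.
Qed.

Lemma card_le_exchange C c x : ~ C x ->
  card_le C (fun y => (C y /\ y <> c) \/ y = x).
Proof.
  intros notCx.
  exists (fun a : {y | C y} =>
    match excluded_middle_informative (proj1_sig a = c) with
    | left _ => exist _ x (or_intror eq_refl)
    | right ne => exist _ (proj1_sig a) (or_introl (conj (proj2_sig a) ne))
    end).
  intros [a Ca] [b Cb]; simpl.
  destruct excluded_middle_informative as [ac | ac];
    destruct excluded_middle_informative as [bc | bc]; intros E.
  - subst; f_equal; apply proof_irrelevance.
  - injection E as <-; contradiction.
  - injection E as ->; contradiction.
  - injection E as ->; f_equal; apply proof_irrelevance.
Qed.

End Cardinality.

Section Trunks.
Variable T : Type.
Variable le : T -> T -> Prop.
Hypothesis le_refl : forall x, le x x.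
Implicit Types (C D M R S : T -> Prop).

Lemma chain_extends_to_maximal D : chain le D ->
  exists M, maximal_chain le M /\ subset D M.
Proof.
  intros Dch.
  destruct (extend_to_maximal (P := chain le) Dch) as [M [Mch [DM Mmax]]].
  - intros F _ Fch Fnest x y Ux Uy.
    refine (union_holds_on_triples (Q := fun a b _ => le a b \/ le b a) _ Fnest
              Ux Uy Ux).
    intros X FX a b c Xa Xb _; exact (Fch X FX a b Xa Xb).
  - exists M; split; [split |]; assumption.
Qed.

Lemma full_trunk_extends_to_maximal S : full_trunk le S ->
  exists R, maximal_full_trunk le R /\ subset S R.
Proof.
  intros Sft.
  destruct (extend_to_maximal (P := full_trunk le) Sft) as [R [Rft [SR Rmax]]].
  - intros F [X0 FX0] Fft Fnest; split.
    + apply union_holds_on_triples; [intros X FX; apply Fft |]; assumption.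
    + destruct (Fft X0 FX0) as [_ [C [Cmax CX0]]].
      exists C; split; [assumption | intros x Cx; exists X0; auto].
  - exists R; split; [split |]; assumption.
Qed.

Lemma maximum_chain_full_trunk C : maximum_chain le C -> full_trunk le C.
Proof.
  intros Cmax; split.
  - intros x y z Cx Cy _ _ _ _ [_ [nxy nyx]].
    destruct Cmax as [[Cch _] _]; destruct (Cch x y Cx Cy); contradiction.
  - exists C; split; [assumption | intros x; auto].
Qed.

Lemma maximum_chain_of_card_le C M :
  maximum_chain le C -> maximal_chain le M -> card_le C M -> maximum_chain le M.
Proof.
  intros [_ Cbig] Mmax CM; split; [assumption |].
  intros D Dch [MD not_DM]; apply (Cbig D Dch); split.
  - exact (card_le_trans CM MD).
  - intros DC; exact (not_DM (card_le_trans DC CM)).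
Qed.

Lemma maximal_chain_incomparable C x : maximal_chain le C -> ~ C x ->
  exists2 c, C c & ~ le x c /\ ~ le c x.
Proof.
  intros [Cch Cmax] notCx; apply NNPP; intros no_incomp.
  assert (comparable : forall c, C c -> le x c \/ le c x).
  { intros c Cc; apply NNPP; intros nc; apply no_incomp; exists c; tauto. }
  apply notCx, (Cmax (fun y => C y \/ y = x)); [| intros y; now left | now right].
  intros a b [Ca | ->] [Cb | ->]; auto.
  destruct (comparable a Ca); auto.
Qed.

Lemma trunk_exchange_chain R C c x :
  trunk le R -> chain le C -> subset C R -> C c -> R x ->
  ~ le x c -> ~ le c x ->
  chain le (fun y => (C y /\ y <> c) \/ y = x).
Proof.
  intros Rtr Cch CR Cc Rx nxc ncx.
  assert (x_comparable : forall d, C d -> d <> c -> le d x \/ le x d).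
  { intros d Cd dc; apply NNPP; intros nd.
    assert (cx : incomp le c x) by (split; [intros <-; auto | tauto]).
    assert (xd : incomp le x d) by (split; [intros <-; auto | tauto]).
    destruct (Rtr c x d (CR c Cc) Rx (CR d Cd) (proj1 cx) (proj1 xd)
                (not_eq_sym dc) cx xd)
      as [_ [ncd ndc]].
    destruct (Cch c d Cc Cd); contradiction. }
  intros a b [[Ca ac] | ->] [[Cb bc] | ->]; auto.
  destruct (x_comparable b Cb bc); auto.
Qed.

Lemma full_trunk_sub_union_max_chains R : full_trunk le R ->
  subset R (union_max_chains le).
Proof.
  intros [Rtr [C [Cmax CR]]] x Rx.
  destruct (classic (C x)) as [Cx | notCx]; [now exists C |].
  destruct (maximal_chain_incomparable (proj1 Cmax) notCx) as [c Cc [nxc ncx]].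
  set (C' := fun y => (C y /\ y <> c) \/ y = x).
  assert (C'ch : chain le C')
    by exact (trunk_exchange_chain Rtr (proj1 (proj1 Cmax)) CR Cc Rx nxc ncx).
  destruct (chain_extends_to_maximal C'ch) as [M [Mmax C'M]].
  exists M; split; [| apply C'M; now right].
  apply (maximum_chain_of_card_le Cmax Mmax).
  exact (card_le_trans (card_le_exchange c notCx) (subset_card_le C'M)).
Qed.

Lemma maximum_chain_sub_rel_max_full_trunk R C :
  rel_max_full_trunk le R -> maximum_chain le C -> subset C R.
Proof.
  intros [_ Runique] Cmax x Cx.
  destruct (full_trunk_extends_to_maximal (maximum_chain_full_trunk Cmax))
    as [S [Smax CS]].
  apply (Runique S Smax), CS, Cx.
Qed.

Lemma rel_max_full_trunk_union_max_chains :
  (exists C, maximum_chain le C) -> trunk le (union_max_chains le) ->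
  rel_max_full_trunk le (union_max_chains le).
Proof.
  intros [C0 C0max] Utr.
  assert (Uft : full_trunk le (union_max_chains le)).
  { split; [assumption |]; exists C0; split; [assumption | now exists C0]. }
  split; [split; [assumption |] |].
  - intros S Sft _; exact (full_trunk_sub_union_max_chains Sft).
  - intros S [Sft Smax] x; split.
    + apply (full_trunk_sub_union_max_chains Sft).
    + apply (Smax _ Uft), (full_trunk_sub_union_max_chains Sft).
Qed.

End Trunks.

Theorem corollary5p7 (T : Type) (le : T -> T -> Prop) :
  is_order le ->
  (exists C, maximum_chain le C) ->
  (forall R, rel_max_full_trunk le R -> same_set R (union_max_chains le)) /\
  ((exists R, rel_max_full_trunk le R) <-> trunk le (union_max_chains le)).
Proof.
  intros [le_refl _] max_chain_exists.
  assert (rel_max_is_union : forall R, rel_max_full_trunk le R ->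
            same_set R (union_max_chains le)).
  { intros R Rrel x; split.
    - apply (full_trunk_sub_union_max_chains le_refl), Rrel.
    - intros [C [Cmax Cx]]; exact (maximum_chain_sub_rel_max_full_trunk Rrel Cmax Cx). }
  split; [exact rel_max_is_union | split].
  - intros [R Rrel] x y z Ux Uy Uz.
    pose proof (rel_max_is_union R Rrel) as RU.
    destruct Rrel as [[[Rtr _] _] _].
    apply Rtr; apply RU; assumption.
  - intros Utr; exists (union_max_chains le).
    exact (rel_max_full_trunk_union_max_chains le_refl max_chain_exists Utr).
Qed.
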